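(* Let $Y$ be a (closed) hyperplane in $c_0$. Then $Y$ has property-$(HB)$ in $c_0$ if and only if $Y$ is an $M$-summand in $c_0$.
   Context: $c_0$ is the space of real null sequences with the sup norm; $c_0^*=\ell_1$. For a closed subspace $Y$ of $X$, $Y^\perp=\{x^*\in X^*:x^*|_Y=0\}$. $Y$ has property-$(HB)$ in $X$ if there is a linear projection $P$ on $X^*$ with range $Y^\perp$ and $\|P\|=1$ such that, writing $G=(I-P)(X^* )$, for every $x^*=y^\#+y^\perp$ with $y^\#\in G$, $0\ne y^\perp\in Y^\perp$, one has $\|x^*\|>\|y^\#\|$ and $\|x^*\|\ge\|y^\perp\|$. $Y$ is an $M$-summand in $X$ if there is a closed subspace $W$ with $X=Y\oplus W$ and $\|y+w\|=\max\{\|y\|,\|w\|\}$ for all $y\in Y,w\in W$. *)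

From Stdlib Require Import Reals.
From Coquelicot Require Import Coquelicot.
Open Scope R_scope.

Definition seqR := nat -> R.
Definition sadd (x y : seqR) : seqR := fun n => x n + y n.
Definition sscal (a : R) (x : seqR) : seqR := fun n => a * x n.
Definition szero : seqR := fun _ => 0.

Definition c0 (x : seqR) : Prop := is_lim_seq x 0.
Definition c0norm (x : seqR) : R :=
  real (Lub_Rbar (fun r => exists n, r = Rabs (x n))).

(* c_0^* = l_1, acting by <f, x> = sum_n f n * x n, with the l_1 norm
   (the dual norm). *)
Definition l1 (f : seqR) : Prop := ex_series (fun n => Rabs (f n)).
Definition l1norm (f : seqR) : R := Series (fun n => Rabs (f n)).
Definition pairing (f x : seqR) : R := Series (fun n => f n * x n).

Definition closed_subspace_c0 (Y : seqR -> Prop) : Prop :=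
  (forall y, Y y -> c0 y) /\
  Y szero /\
  (forall y z, Y y -> Y z -> Y (sadd y z)) /\
  (forall a y, Y y -> Y (sscal a y)) /\
  (forall x, c0 x ->
     (forall eps, 0 < eps -> exists y, Y y /\ c0norm (sadd x (sscal (-1) y)) < eps) ->
     Y x).

Definition hyperplane_c0 (Y : seqR -> Prop) : Prop :=
  closed_subspace_c0 Y /\
  exists x0, c0 x0 /\ ~ Y x0 /\
    forall x, c0 x -> exists y t, Y y /\ x = sadd y (sscal t x0).

Definition annih (Y : seqR -> Prop) (f : seqR) : Prop :=
  l1 f /\ forall y, Y y -> pairing f y = 0.

Definition property_HB_c0 (Y : seqR -> Prop) : Prop :=
  exists P : seqR -> seqR,
    (forall f, l1 f -> l1 (P f)) /\
    (forall a b f g, l1 f -> l1 g ->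
        P (sadd (sscal a f) (sscal b g)) = sadd (sscal a (P f)) (sscal b (P g))) /\
    (forall f, l1 f -> P (P f) = P f) /\
    (forall f, l1 f -> annih Y (P f)) /\
    (forall g, annih Y g -> exists f, l1 f /\ P f = g) /\
    (forall f, l1 f -> l1norm (P f) <= l1norm f) /\
    (forall c, c < 1 -> exists f, l1 f /\ l1norm (P f) > c * l1norm f) /\
    (forall g h,
        (exists f, l1 f /\ g = sadd f (sscal (-1) (P f))) ->
        annih Y h -> h <> szero ->
        l1norm (sadd g h) > l1norm g /\ l1norm (sadd g h) >= l1norm h).

Definition M_summand_c0 (Y : seqR -> Prop) : Prop :=
  exists W : seqR -> Prop,
    closed_subspace_c0 W /\
    (forall x, Y x -> W x -> x = szero) /\
    (forall x, c0 x -> exists y w, Y y /\ W w /\ x = sadd y w) /\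
    (forall y w, Y y -> W w -> c0norm (sadd y w) = Rmax (c0norm y) (c0norm w)).

From Stdlib Require Import Reals Lra Lia Classical FunctionalExtensionality PropExtensionality.
From Coquelicot Require Import Coquelicot.
Open Scope R_scope.

(* Both properties single out the coordinate hyperplanes E_i = {x : x_i = 0}.
   E_i is an M-summand with complement span e_i, and it has (HB) via P f = f_i e_i.
   Conversely, let w be a nonzero vector of an M-complement of Y with |w_i| = ||w||;
   any y in Y with y_i <> 0 can be scaled so that (y + w)_i overshoots |w_i|, breaking
   ||y + w|| = max(||y||, ||w||), so Y lies in E_i.  If Y has (HB) with projection P,
   then Y^perp is the line spanned by some phi = P f <> 0.  Were phi supported at two
   points, split it as phi = u + v with disjoint supports: ||P|| <= 1 forces
   P u = (||u|| / ||phi||) phi, and (HB) for u = (u - P u) + P u then gives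
   ||v|| < ||u||; by symmetry ||u|| < ||v|| too. *)

Definition single (i : nat) (c : R) : seqR := fun n => if Nat.eq_dec n i then c else 0.

Lemma single_at i c : single i c i = c.
Proof. unfold single; destruct (Nat.eq_dec i i); congruence. Qed.

Lemma single_off i c n : n <> i -> single i c n = 0.
Proof. intro; unfold single; destruct (Nat.eq_dec n i); congruence. Qed.

Lemma sum_n_supp1 (a : seqR) i : (forall n, n <> i -> a n = 0) ->
  forall n, sum_n a n = if Compare_dec.le_dec i n then a i else 0.
Proof.
  intros Ha n; induction n as [|n IH].
  - rewrite sum_O. destruct (Compare_dec.le_dec i 0).
    + now replace i with 0%nat by lia.
    + apply Ha; lia.
  - rewrite sum_Sn, IH. change plus with Rplus.
    destruct (Nat.eq_dec (S n) i) as [<-|Hne].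
    + destruct (Compare_dec.le_dec (S n) n), (Compare_dec.le_dec (S n) (S n)); try lia; lra.
    + rewrite (Ha _ Hne).
      destruct (Compare_dec.le_dec i n), (Compare_dec.le_dec i (S n)); try lia; lra.
Qed.

Lemma is_series_supp1 (a : seqR) i : (forall n, n <> i -> a n = 0) -> is_series a (a i).
Proof.
  intro Ha. change (is_lim_seq (sum_n a) (a i)).
  apply is_lim_seq_ext_loc with (fun _ => a i); [|apply is_lim_seq_const].
  exists i; intros n Hn. rewrite (sum_n_supp1 a i Ha).
  destruct (Compare_dec.le_dec i n); [reflexivity|lia].
Qed.

Lemma Series_supp1 (a : seqR) i : (forall n, n <> i -> a n = 0) -> Series a = a i.
Proof. intro Ha. now apply is_series_unique, is_series_supp1. Qed.

Lemma l1_single i c : l1 (single i c).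
Proof.
  exists (Rabs (single i c i)). apply (is_series_supp1 (fun n => Rabs (single i c n))).
  intros n Hn. now rewrite single_off, Rabs_R0.
Qed.

Lemma l1norm_single i c : l1norm (single i c) = Rabs c.
Proof.
  unfold l1norm. rewrite (Series_supp1 _ i), single_at; [reflexivity|].
  intros n Hn. now rewrite single_off, Rabs_R0.
Qed.

Lemma pairing_single_r f i c : pairing f (single i c) = f i * c.
Proof.
  unfold pairing. rewrite (Series_supp1 _ i), single_at; [reflexivity|].
  intros n Hn. rewrite single_off by assumption. ring.
Qed.

Lemma pairing_single_l f i c : pairing (single i c) f = c * f i.
Proof.
  unfold pairing. rewrite (Series_supp1 _ i), single_at; [reflexivity|].
  intros n Hn. rewrite single_off by assumption. ring.
Qed.

Lemma l1_coord_le f i : l1 f -> Rabs (f i) <= l1norm f.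
Proof.
  intro Hf. unfold l1norm. apply Rle_trans with (Series (single i (Rabs (f i)))).
  - rewrite (Series_supp1 _ i), single_at; [apply Rle_refl|].
    intros n Hn; now apply single_off.
  - apply Series_le; [|exact Hf]. intro n. unfold single.
    destruct (Nat.eq_dec n i) as [->|]; split; auto using Rabs_pos, Rle_refl.
Qed.

Lemma l1norm_ge0 f : l1 f -> 0 <= l1norm f.
Proof. intro Hf. apply Rle_trans with (Rabs (f 0%nat)); auto using Rabs_pos, l1_coord_le. Qed.

Lemma l1norm_pos_nonzero f : 0 < l1norm f -> exists n, f n <> 0.
Proof.
  intro Hpos. apply NNPP; intro Hz.
  assert (Hf0 : l1norm f = 0).
  { unfold l1norm. rewrite (Series_ext _ (fun n => 0 * Rabs (f n))), Series_scal_l; [ring|].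
    intro n. destruct (Req_dec (f n) 0) as [->|Hn]; [rewrite Rabs_R0; ring|exfalso; eauto]. }
  lra.
Qed.

Lemma l1_add f g : l1 f -> l1 g -> l1 (sadd f g).
Proof.
  intros Hf Hg. unfold l1, sadd.
  apply (@ex_series_le R_AbsRing R_CompleteNormedModule) with (fun n => Rabs (f n) + Rabs (g n)).
  - intro n. change norm with Rabs. rewrite Rabs_Rabsolu. apply Rabs_triang.
  - now apply (ex_series_plus (fun n => Rabs (f n)) (fun n => Rabs (g n))).
Qed.

Lemma l1_scal f a : l1 f -> l1 (sscal a f).
Proof.
  intro Hf. unfold l1, sscal.
  apply ex_series_ext with (fun n => Rabs a * Rabs (f n)).
  - intro n; symmetry; apply Rabs_mult.
  - now apply (ex_series_scal_l (Rabs a) (fun n => Rabs (f n))).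
Qed.

Lemma l1norm_scal f a : l1norm (sscal a f) = Rabs a * l1norm f.
Proof.
  unfold l1norm, sscal. rewrite <- Series_scal_l. apply Series_ext; intro n; apply Rabs_mult.
Qed.

Definition disjoint_supp (u v : seqR) : Prop := forall n, u n = 0 \/ v n = 0.

Lemma l1norm_comb_disjoint u v a b : l1 u -> l1 v -> disjoint_supp u v ->
  l1norm (sadd (sscal a u) (sscal b v)) = Rabs a * l1norm u + Rabs b * l1norm v.
Proof.
  intros Hu Hv Huv. unfold l1norm, sadd, sscal.
  rewrite <- !Series_scal_l, <- Series_plus.
  - apply Series_ext; intro n.
    destruct (Huv n) as [-> | ->]; rewrite Rmult_0_r, Rabs_R0, Rmult_0_r;
      [rewrite !Rplus_0_l | rewrite !Rplus_0_r]; apply Rabs_mult.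
  - now apply (ex_series_scal_l (Rabs a) (fun n => Rabs (u n))).
  - now apply (ex_series_scal_l (Rabs b) (fun n => Rabs (v n))).
Qed.

Lemma c0_single i c : c0 (single i c).
Proof.
  apply is_lim_seq_ext_loc with (fun _ => 0); [|apply is_lim_seq_const].
  exists (S i). intros n Hn. symmetry; apply single_off; lia.
Qed.

Lemma c0_add x y : c0 x -> c0 y -> c0 (sadd x y).
Proof.
  intros Hx Hy. unfold c0, sadd. rewrite <- (Rplus_0_r 0).
  now apply (is_lim_seq_plus' x y).
Qed.

Lemma c0_scal x a : c0 x -> c0 (sscal a x).
Proof.
  intro Hx. unfold c0, sscal. rewrite <- (Rmult_0_r a).
  now apply (is_lim_seq_scal_l x a 0).
Qed.

Lemma c0_tail_le1 x : c0 x -> exists N, forall n, (N <= n)%nat -> Rabs (x n) <= 1.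
Proof.
  intro Hx. apply is_lim_seq_spec in Hx. destruct (Hx (mkposreal 1 Rlt_0_1)) as [N HN].
  exists N; intros n Hn. specialize (HN n Hn). simpl in HN. rewrite Rminus_0_r in HN. lra.
Qed.

Lemma ex_series_pairing f x : l1 f -> c0 x -> ex_series (fun n => f n * x n).
Proof.
  intros Hf Hx. destruct (c0_tail_le1 x Hx) as [N HN].
  apply (ex_series_incr_n _ N).
  apply (@ex_series_le R_AbsRing R_CompleteNormedModule) with (fun k => Rabs (f (N + k)%nat)).
  - intro k. change norm with Rabs. rewrite Rabs_mult.
    rewrite <- (Rmult_1_r (Rabs (f (N + k)%nat))) at 2.
    apply Rmult_le_compat_l; auto using Rabs_pos. apply HN; lia.
  - now apply (ex_series_incr_n (fun n => Rabs (f n)) N).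
Qed.

Lemma pairing_comb_r f x y t : l1 f -> c0 x -> c0 y ->
  pairing f (sadd x (sscal t y)) = pairing f x + t * pairing f y.
Proof.
  intros Hf Hx Hy. unfold pairing, sadd, sscal.
  rewrite <- Series_scal_l, <- Series_plus.
  - apply Series_ext; intro n; ring.
  - now apply ex_series_pairing.
  - apply (ex_series_scal_l t (fun n => f n * y n)). now apply ex_series_pairing.
Qed.

Lemma pairing_comb_l f g a x : l1 f -> l1 g -> c0 x ->
  pairing (sadd f (sscal a g)) x = pairing f x + a * pairing g x.
Proof.
  intros Hf Hg Hx. unfold pairing, sadd, sscal.
  rewrite <- Series_scal_l, <- Series_plus.
  - apply Series_ext; intro n; ring.
  - now apply ex_series_pairing.
  - apply (ex_series_scal_l a (fun n => g n * x n)). now apply ex_series_pairing.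
Qed.

Definition bounded (x : seqR) : Prop := exists M, forall n, Rabs (x n) <= M.

Lemma prefix_argmax (x : seqR) N :
  exists i, (i <= N)%nat /\ forall n, (n <= N)%nat -> Rabs (x n) <= Rabs (x i).
Proof.
  induction N as [|N [i [Hi HM]]].
  - exists 0%nat. split; [lia|]. intros n Hn. replace n with 0%nat by lia. apply Rle_refl.
  - destruct (Rle_dec (Rabs (x i)) (Rabs (x (S N)))) as [Hle|Hlt].
    + exists (S N). split; [lia|]. intros n Hn.
      destruct (Nat.eq_dec n (S N)) as [->|]; [apply Rle_refl|].
      apply Rle_trans with (Rabs (x i)); [apply HM; lia|exact Hle].
    + exists i. split; [lia|]. intros n Hn.
      destruct (Nat.eq_dec n (S N)) as [->|]; [lra|apply HM; lia].
Qed.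

Lemma c0_bounded x : c0 x -> bounded x.
Proof.
  intro Hx. destruct (c0_tail_le1 x Hx) as [N HN]. destruct (prefix_argmax x N) as [i [_ HM]].
  exists (Rmax (Rabs (x i)) 1). intro n. destruct (Compare_dec.le_dec n N).
  - apply Rle_trans with (Rabs (x i)); [apply HM; lia|apply Rmax_l].
  - apply Rle_trans with 1; [apply HN; lia|apply Rmax_r].
Qed.

Lemma c0_attains_norm x k : c0 x -> x k <> 0 ->
  exists i, forall n, Rabs (x n) <= Rabs (x i).
Proof.
  intros Hx Hk. apply is_lim_seq_spec in Hx.
  assert (Hpos : 0 < Rabs (x k)) by (apply Rabs_pos_lt; assumption).
  destruct (Hx (mkposreal _ Hpos)) as [N HN].
  destruct (prefix_argmax x (max N k)) as [i [_ HM]].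
  exists i. intro n. destruct (Compare_dec.le_dec n (max N k)); [now apply HM|].
  specialize (HN n ltac:(lia)). simpl in HN. rewrite Rminus_0_r in HN.
  assert (Rabs (x k) <= Rabs (x i)) by (apply HM; lia). lra.
Qed.

Lemma c0norm_spec x M : (forall n, Rabs (x n) <= M) ->
  (forall n, Rabs (x n) <= c0norm x) /\ c0norm x <= M.
Proof.
  intro HM. unfold c0norm.
  destruct (Lub_Rbar_correct (fun r => exists n, r = Rabs (x n))) as [Hub Hlub].
  assert (HMub : is_ub_Rbar (fun r => exists n, r = Rabs (x n)) M).
  { intros r [n ->]. exact (HM n). }
  specialize (Hlub _ HMub).
  assert (H0 := Hub (Rabs (x 0%nat)) (ex_intro _ 0%nat eq_refl)).
  destruct (Lub_Rbar _) as [l| |]; simpl in *; try contradiction.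
  split; [|exact Hlub]. intro n. apply (Hub (Rabs (x n))). eauto.
Qed.

Lemma c0norm_ge x n : bounded x -> Rabs (x n) <= c0norm x.
Proof. intros [M HM]. now apply (c0norm_spec x M HM). Qed.

Lemma c0norm_le x M : (forall n, Rabs (x n) <= M) -> c0norm x <= M.
Proof. intro HM. now apply (c0norm_spec x M HM). Qed.

Definition coord_hyperplane (i : nat) (x : seqR) : Prop := c0 x /\ x i = 0.

Lemma hyperplane_sub_coord_eq Y i : hyperplane_c0 Y -> (forall y, Y y -> y i = 0) ->
  Y = coord_hyperplane i.
Proof.
  intros [[HYc _] [x0 [_ [_ Hdec]]]] Hsub.
  assert (Hx0i : x0 i <> 0).
  { destruct (Hdec (single i 1) (c0_single i 1)) as [y [t [Hy E]]].
    apply (f_equal (fun f => f i)) in E. unfold sadd, sscal in E.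
    rewrite single_at, (Hsub y Hy) in E. intro Z; rewrite Z in E; lra. }
  apply functional_extensionality; intro x. apply propositional_extensionality. split.
  - intro Hx. split; auto.
  - intros [Hx Hxi]. destruct (Hdec x Hx) as [y [t [Hy E]]].
    assert (Ht : t = 0).
    { apply (f_equal (fun f => f i)) in E. unfold sadd, sscal in E.
      rewrite (Hsub y Hy), Hxi in E.
      destruct (Rmult_integral t (x0 i)) as [|]; [lra|assumption|contradiction]. }
    replace x with y; [exact Hy|].
    rewrite E, Ht. apply functional_extensionality; intro n. unfold sadd, sscal. ring.
Qed.

Lemma annih_coord_hyperplane i g : annih (coord_hyperplane i) g -> g = single i (g i).
Proof.
  intros [_ Hg]. apply functional_extensionality; intro n.
  destruct (Nat.eq_dec n i) as [->|Hni]; [now rewrite single_at|].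
  rewrite single_off by assumption.
  assert (K := Hg (single n 1) (conj (c0_single n 1) (single_off n 1 i (not_eq_sym Hni)))).
  rewrite pairing_single_r in K. lra.
Qed.

Lemma coord_hyperplane_HB i : property_HB_c0 (coord_hyperplane i).
Proof.
  exists (fun f => single i (f i)).
  split; [intros; apply l1_single|].
  split.
  { intros a b f g _ _. apply functional_extensionality; intro n. unfold single, sadd, sscal.
    destruct (Nat.eq_dec n i), (Nat.eq_dec i i); try congruence; ring. }
  split; [intros; now rewrite single_at|].
  split.
  { intros f _. split; [apply l1_single|]. intros y [_ Hy]. now rewrite pairing_single_l, Hy, Rmult_0_r. }
  split; [intros g Hg; exists g; split; [apply Hg|symmetry; now apply annih_coord_hyperplane]|].
  split; [intros f Hf; rewrite l1norm_single; now apply l1_coord_le|].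
  split.
  { intros c Hc. exists (single i 1). split; [apply l1_single|].
    rewrite single_at, l1norm_single, Rabs_R1. lra. }
  intros g h [f [Hf ->]] Hh Hh0.
  rewrite (annih_coord_hyperplane i h Hh) in *.
  set (g := sadd f (sscal (-1) (single i (f i)))).
  assert (Hg : l1 g) by (apply l1_add, l1_scal, l1_single; assumption).
  assert (Hdisj : disjoint_supp g (single i (h i))).
  { intro n. destruct (Nat.eq_dec n i) as [->|Hni].
    - left. unfold g, sadd, sscal. rewrite single_at. ring.
    - right. now apply single_off. }
  assert (Hsum := l1norm_comb_disjoint _ _ 1 1 Hg (l1_single i (h i)) Hdisj).
  replace (sadd (sscal 1 g) (sscal 1 (single i (h i)))) with (sadd g (single i (h i))) in Hsum
    by (apply functional_extensionality; intro n; unfold sadd, sscal; ring).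
  rewrite Hsum, Rabs_R1, l1norm_single.
  assert (0 < Rabs (h i)).
  { apply Rabs_pos_lt. intro Z. apply Hh0. rewrite Z.
    apply functional_extensionality; intro n. unfold single, szero. now destruct (Nat.eq_dec n i). }
  assert (0 <= l1norm g) by now apply l1norm_ge0.
  split; lra.
Qed.

Lemma c0norm_single i t : c0norm (single i t) = Rabs t.
Proof.
  apply Rle_antisym.
  - apply c0norm_le. intro n. unfold single. destruct (Nat.eq_dec n i).
    + apply Rle_refl.
    + rewrite Rabs_R0. apply Rabs_pos.
  - rewrite <- (single_at i t) at 1. apply c0norm_ge, c0_bounded, c0_single.
Qed.

Lemma c0norm_add_single y i t : c0 y -> y i = 0 ->
  c0norm (sadd y (single i t)) = Rmax (c0norm y) (Rabs t).
Proof.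
  intros Hy Hyi.
  assert (Hby : bounded y) by now apply c0_bounded.
  assert (Hbz : bounded (sadd y (single i t))) by (apply c0_bounded, c0_add, c0_single; assumption).
  assert (Hzi : sadd y (single i t) i = t) by (unfold sadd; rewrite single_at, Hyi; ring).
  assert (Hzn : forall n, n <> i -> sadd y (single i t) n = y n)
    by (intros n Hn; unfold sadd; rewrite single_off by assumption; ring).
  apply Rle_antisym.
  - apply c0norm_le. intro n. destruct (Nat.eq_dec n i) as [->|Hni].
    + rewrite Hzi. apply Rmax_r.
    + rewrite Hzn by assumption. apply Rle_trans with (c0norm y); [now apply c0norm_ge|apply Rmax_l].
  - apply Rmax_lub.
    + apply c0norm_le. intro n. destruct (Nat.eq_dec n i) as [->|Hni].
      * rewrite Hyi, Rabs_R0. apply Rle_trans with (Rabs (sadd y (single i t) i)).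
        -- apply Rabs_pos.
        -- now apply c0norm_ge.
      * rewrite <- (Hzn n Hni). now apply c0norm_ge.
    + rewrite <- Hzi at 1. now apply c0norm_ge.
Qed.

Lemma line_closed_subspace i : closed_subspace_c0 (fun x => exists t, x = single i t).
Proof.
  split; [intros y [t ->]; apply c0_single|].
  split.
  { exists 0. apply functional_extensionality; intro n. unfold single, szero. now destruct (Nat.eq_dec n i). }
  split.
  { intros y z [t1 ->] [t2 ->]. exists (t1 + t2). apply functional_extensionality; intro n.
    unfold single, sadd. destruct (Nat.eq_dec n i); ring. }
  split.
  { intros a y [t ->]. exists (a * t). apply functional_extensionality; intro n.
    unfold single, sscal. destruct (Nat.eq_dec n i); ring. }
  intros x Hx Happrox. exists (x i). apply functional_extensionality; intro n.
  destruct (Nat.eq_dec n i) as [->|Hni]; [now rewrite single_at|].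
  rewrite single_off by assumption.
  destruct (Req_dec (x n) 0) as [|Hxn]; [assumption|exfalso].
  destruct (Happrox (Rabs (x n)) (Rabs_pos_lt _ Hxn)) as [y [[t ->] Hlt]].
  set (d := sadd x (sscal (-1) (single i t))) in Hlt.
  assert (Hdn : d n = x n) by (unfold d, sadd, sscal; rewrite single_off by assumption; ring).
  assert (K : Rabs (d n) <= c0norm d)
    by (apply c0norm_ge, c0_bounded, c0_add, c0_scal, c0_single; assumption).
  rewrite Hdn in K. lra.
Qed.

Lemma coord_hyperplane_M_summand i : M_summand_c0 (coord_hyperplane i).
Proof.
  exists (fun x => exists t, x = single i t).
  split; [apply line_closed_subspace|].
  split.
  { intros x [_ Hxi] [t ->]. rewrite single_at in Hxi. subst t.
    apply functional_extensionality; intro n. unfold single, szero. now destruct (Nat.eq_dec n i). }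
  split.
  { intros x Hx. exists (sadd x (sscal (-1) (single i (x i)))), (single i (x i)).
    split; [split|split].
    - apply c0_add, c0_scal, c0_single; assumption.
    - unfold sadd, sscal. rewrite single_at. ring.
    - eauto.
    - apply functional_extensionality; intro n. unfold sadd, sscal. ring. }
  intros y w [Hy Hyi] [t ->]. now rewrite c0norm_add_single, c0norm_single.
Qed.

Lemma c0norm_add_gt_max y w i : c0 y -> c0 w -> (forall n, Rabs (w n) <= Rabs (w i)) ->
  y i <> 0 -> w i <> 0 ->
  exists s, Rmax (c0norm (sscal s y)) (c0norm w) < c0norm (sadd (sscal s y) w).
Proof.
  intros Hy Hw Hpeak Hyi Hwi.
  set (C := c0norm y).
  assert (HyC : forall n, Rabs (y n) <= C) by (intro n; apply c0norm_ge, c0_bounded, Hy).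
  assert (HC : 0 < C).
  { apply Rlt_le_trans with (Rabs (y i)); [now apply Rabs_pos_lt|apply HyC]. }
  set (u := / C).
  assert (Hu : C * u = 1) by (apply Rinv_r; lra).
  assert (Hu0 : 0 < u) by (apply Rinv_0_lt_compat, HC).
  assert (Hwi_pos : 0 < Rabs (w i)) by now apply Rabs_pos_lt.
  (* (s y)_i has the sign of w_i, and ||s y|| <= |w_i| since |y_i| <= ||y||. *)
  set (s := w i * y i * (u * u)).
  exists s.
  assert (Hw_norm : c0norm w = Rabs (w i)).
  { apply Rle_antisym; [now apply c0norm_le|apply c0norm_ge, c0_bounded, Hw]. }
  assert (Hsy_norm : c0norm (sscal s y) <= Rabs (w i)).
  { apply c0norm_le. intro n. unfold sscal, s. rewrite !Rabs_mult, (Rabs_pos_eq u) by lra.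
    assert (Hi1 : Rabs (y i) * u <= 1) by (specialize (HyC i); nra).
    assert (Hn1 : Rabs (y n) * u <= 1) by (specialize (HyC n); nra).
    assert (0 <= Rabs (y i) * u) by (apply Rmult_le_pos; [apply Rabs_pos|lra]).
    assert (0 <= Rabs (y n) * u) by (apply Rmult_le_pos; [apply Rabs_pos|lra]).
    assert (Rabs (y i) * u * (Rabs (y n) * u) <= 1) by nra.
    nra. }
  assert (Hpeak_val : Rabs (w i) < Rabs (sadd (sscal s y) w i)).
  { assert (Hsq : 0 < (y i * u) * (y i * u)) by (apply Rlt_0_sqr; apply Rmult_integral_contrapositive; lra).
    unfold sadd, sscal, s.
    replace (w i * y i * (u * u) * y i + w i) with (w i * (1 + (y i * u) * (y i * u))) by ring.
    rewrite Rabs_mult, (Rabs_pos_eq (1 + _)) by lra. nra. }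
  apply Rle_lt_trans with (Rabs (w i)).
  - apply Rmax_lub; lra.
  - apply Rlt_le_trans with (1 := Hpeak_val).
    apply c0norm_ge, c0_bounded, c0_add; [apply c0_scal|]; assumption.
Qed.

Lemma M_summand_sub_coord Y : closed_subspace_c0 Y -> (exists x0, c0 x0 /\ ~ Y x0) ->
  M_summand_c0 Y -> exists i, forall y, Y y -> y i = 0.
Proof.
  intros [HYc [_ [_ [HYscal _]]]] [x0 [Hx0 Hnx0]] [W [[HWc _] [_ [Hdec Hmax]]]].
  destruct (Hdec x0 Hx0) as [y0 [w [Hy0 [Hw ->]]]].
  destruct (classic (exists k, w k <> 0)) as [[k Hk]|Hw0].
  2:{ exfalso. apply Hnx0. replace (sadd y0 w) with y0; [exact Hy0|].
      apply functional_extensionality; intro n. unfold sadd.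
      destruct (Req_dec (w n) 0) as [->|Hn]; [ring|exfalso; eauto]. }
  destruct (c0_attains_norm w k (HWc w Hw) Hk) as [i Hpeak].
  assert (Hwi : w i <> 0).
  { intro Z. specialize (Hpeak k). rewrite Z, Rabs_R0 in Hpeak.
    assert (0 < Rabs (w k)) by now apply Rabs_pos_lt. lra. }
  exists i. intros y Hy. apply NNPP; intro Hyi.
  destruct (c0norm_add_gt_max y w i (HYc y Hy) (HWc w Hw) Hpeak Hyi Hwi) as [s Hs].
  rewrite (Hmax (sscal s y) w (HYscal s y Hy) Hw) in Hs. lra.
Qed.

Lemma hyperplane_annih_line Y phi g : hyperplane_c0 Y -> annih Y phi -> (exists n, phi n <> 0) ->
  annih Y g -> exists c, g = sscal c phi.
Proof.
  intros [[HYc _] [x0 [Hx0 [_ Hdec]]]] [Hphi HphiY] [j Hj] [Hg HgY].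
  assert (Hvanish : forall h, l1 h -> (forall y, Y y -> pairing h y = 0) -> pairing h x0 = 0 ->
                     forall n, h n = 0).
  { intros h Hh HhY Hhx0 n. destruct (Hdec (single n 1) (c0_single n 1)) as [y [t [Hy E]]].
    assert (K : pairing h (single n 1) = 0) by (rewrite E, pairing_comb_r, HhY, Hhx0 by auto; ring).
    rewrite pairing_single_r in K. lra. }
  assert (Hphix0 : pairing phi x0 <> 0) by (intro Z; apply Hj; now apply Hvanish).
  set (c := pairing g x0 / pairing phi x0).
  exists c. apply functional_extensionality; intro n.
  assert (Kn : sadd g (sscal (- c) phi) n = 0).
  { apply Hvanish.
    - apply l1_add, l1_scal; assumption.
    - intros y Hy. rewrite pairing_comb_l, HgY, HphiY by auto. ring.
    - rewrite pairing_comb_l by auto. unfold c. field. assumption. }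
  unfold sadd, sscal in Kn |- *. lra.
Qed.

Section HB_projection.

Variables (Y : seqR -> Prop) (P : seqR -> seqR).

Hypothesis P_lin : forall a b f g, l1 f -> l1 g ->
  P (sadd (sscal a f) (sscal b g)) = sadd (sscal a (P f)) (sscal b (P g)).
Hypothesis P_idem : forall f, l1 f -> P (P f) = P f.
Hypothesis P_annih : forall f, l1 f -> annih Y (P f).
Hypothesis P_contr : forall f, l1 f -> l1norm (P f) <= l1norm f.
Hypothesis P_HB : forall g h, (exists f, l1 f /\ g = sadd f (sscal (-1) (P f))) ->
  annih Y h -> h <> szero -> l1norm (sadd g h) > l1norm g /\ l1norm (sadd g h) >= l1norm h.

Lemma HB_split_lt phi u v a b : l1 u -> l1 v -> disjoint_supp u v -> phi = sadd u v ->
  P phi = phi -> P u = sscal a phi -> P v = sscal b phi -> 0 < l1norm u -> l1norm v < l1norm u.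
Proof.
  intros Hu Hv Huv Ephi HPphi HPu HPv Hnu.
  assert (Hnv : 0 <= l1norm v) by now apply l1norm_ge0.
  assert (Hnorm : forall al be,
            l1norm (sadd (sscal al u) (sscal be v)) = Rabs al * l1norm u + Rabs be * l1norm v)
    by (intros; now apply l1norm_comb_disjoint).
  assert (Ephi1 : phi = sadd (sscal 1 u) (sscal 1 v))
    by (rewrite Ephi; apply functional_extensionality; intro n; unfold sadd, sscal; ring).
  assert (Nphi : l1norm phi = l1norm u + l1norm v) by (rewrite Ephi1, Hnorm, Rabs_R1; ring).
  destruct (l1norm_pos_nonzero u Hnu) as [n Hn].
  assert (Hphin : phi n = u n).
  { rewrite Ephi. unfold sadd. destruct (Huv n) as [Hu0|Hv0]; [contradiction|rewrite Hv0; ring]. }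
  assert (Hab : a + b = 1).
  { assert (L := f_equal (fun f => f n) (P_lin 1 1 u v Hu Hv)). simpl in L.
    rewrite <- Ephi1, HPphi, HPu, HPv in L. unfold sadd, sscal in L. rewrite Hphin in L.
    apply (Rmult_eq_reg_r (u n)); [lra|assumption]. }
  assert (Ha := P_contr u Hu). rewrite HPu, l1norm_scal, Nphi in Ha.
  assert (Hb := P_contr v Hv). rewrite HPv, l1norm_scal, Nphi in Hb.
  assert (Ra := Rle_abs a). assert (Rb := Rle_abs b).
  assert (Ha_eq : a * (l1norm u + l1norm v) = l1norm u) by nra.
  assert (Hb_eq : b * (l1norm u + l1norm v) = l1norm v) by nra.
  assert (Ha_pos : 0 < a) by nra.
  assert (Hb_nonneg : 0 <= b) by nra.
  assert (HPu0 : P u <> szero).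
  { intro Z. apply (f_equal (fun f => f n)) in Z. rewrite HPu in Z. unfold sscal, szero in Z.
    rewrite Hphin in Z. destruct (Rmult_integral _ _ Z); lra. }
  destruct (P_HB (sadd u (sscal (-1) (P u))) (P u) (ex_intro _ u (conj Hu eq_refl))
              (P_annih u Hu) HPu0) as [K _].
  replace (sadd (sadd u (sscal (-1) (P u))) (P u)) with u in K
    by (apply functional_extensionality; intro m; unfold sadd, sscal; ring).
  replace (sadd u (sscal (-1) (P u))) with (sadd (sscal b u) (sscal (- a) v)) in K
    by (rewrite HPu, Ephi; apply functional_extensionality; intro m; unfold sadd, sscal; nra).
  rewrite Hnorm, Rabs_Ropp, (Rabs_pos_eq a), (Rabs_pos_eq b) in K by lra.
  nra.
Qed.

Lemma HB_annih_single_support phi j : hyperplane_c0 Y -> annih Y phi -> P phi = phi ->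
  phi j <> 0 -> phi = single j (phi j).
Proof.
  intros HY Hphi HPphi Hj.
  apply functional_extensionality; intro k.
  destruct (Nat.eq_dec k j) as [->|Hkj]; [now rewrite single_at|].
  rewrite single_off by assumption.
  apply NNPP; intro Hk.
  assert (Hphil1 : l1 phi) by apply Hphi.
  set (u := single j (phi j)). set (v := sadd phi (sscal (-1) u)).
  assert (Hu : l1 u) by apply l1_single.
  assert (Hv : l1 v) by (apply l1_add, l1_scal; assumption).
  assert (Hvk : v k = phi k) by (unfold v, u, sadd, sscal; rewrite single_off by assumption; ring).
  assert (Huv : disjoint_supp u v).
  { intro n. destruct (Nat.eq_dec n j) as [->|Hnj].
    - right. unfold v, u, sadd, sscal. rewrite single_at. ring.
    - left. now apply single_off. }
  assert (Hvu : disjoint_supp v u) by (intro n; destruct (Huv n); auto).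
  assert (Euv : phi = sadd u v)
    by (apply functional_extensionality; intro n; unfold v, sadd, sscal; ring).
  assert (Evu : phi = sadd v u)
    by (apply functional_extensionality; intro n; unfold v, sadd, sscal; ring).
  destruct (hyperplane_annih_line Y phi (P u) HY Hphi (ex_intro _ j Hj) (P_annih u Hu)) as [a Ha].
  destruct (hyperplane_annih_line Y phi (P v) HY Hphi (ex_intro _ j Hj) (P_annih v Hv)) as [b Hb].
  assert (Hnu : 0 < l1norm u) by (unfold u; rewrite l1norm_single; now apply Rabs_pos_lt).
  assert (Hnv : 0 < l1norm v).
  { apply Rlt_le_trans with (Rabs (v k)); [rewrite Hvk; now apply Rabs_pos_lt|now apply l1_coord_le]. }
  assert (H1 := HB_split_lt phi u v a b Hu Hv Huv Euv HPphi Ha Hb Hnu).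
  assert (H2 := HB_split_lt phi v u b a Hv Hu Hvu Evu HPphi Hb Ha Hnv).
  lra.
Qed.

Lemma HB_sub_coord : hyperplane_c0 Y -> (exists f, l1 f /\ 0 < l1norm (P f)) ->
  exists i, forall y, Y y -> y i = 0.
Proof.
  intros HY [f [Hf Hpos]].
  destruct (l1norm_pos_nonzero (P f) Hpos) as [i Hi].
  assert (Hphi : annih Y (P f)) by now apply P_annih.
  assert (Ephi := HB_annih_single_support (P f) i HY Hphi (P_idem f Hf) Hi).
  exists i. intros y Hy.
  assert (K := proj2 Hphi y Hy). rewrite Ephi, pairing_single_l in K.
  destruct (Rmult_integral _ _ K); [contradiction|assumption].
Qed.

End HB_projection.

Theorem corollary3p17 (Y : seqR -> Prop) :
  hyperplane_c0 Y -> (property_HB_c0 Y <-> M_summand_c0 Y).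
Proof.
  intros HY. split.
  - intros (P & _ & Plin & Pidem & Pann & _ & Pcontr & Pnorm1 & Phb).
    destruct (HB_sub_coord Y P Plin Pidem Pann Pcontr Phb HY) as [i Hi].
    { destruct (Pnorm1 0 Rlt_0_1) as [f [Hf Hpos]]. exists f. split; [assumption|lra]. }
    rewrite (hyperplane_sub_coord_eq Y i HY Hi). apply coord_hyperplane_M_summand.
  - intros HM. pose proof HY as [HYsub [x0 [Hx0 [Hnx0 _]]]].
    destruct (M_summand_sub_coord Y HYsub (ex_intro _ x0 (conj Hx0 Hnx0)) HM) as [i Hi].
    rewrite (hyperplane_sub_coord_eq Y i HY Hi). apply coord_hyperplane_HB.
Qed.
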